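(* Let $P\subseteq\mathbb{R}^n$ be an $n$-dimensional rational simplex with vertices $v_0,\dots,v_n$, and let $a_i$ be the lattice distance of $v_i$ from the facet of $P$ not containing $v_i$. Then \[\tau(P)=\mu(P)=\sum_{i=0}^n\frac{1}{a_i}.\]
   Context: Write $P$ irredundantly as $\{x:\langle c_j,x\rangle\ge b_j\}$ with primitive $c_j\in(\mathbb{Z}^n)^*$, each inequality defining a facet $F_j$; the lattice distance of $y$ from $F_j$ is $d_{F_j}(y):=\langle c_j,y\rangle-b_j$, and $d_P(y):=\min_j d_{F_j}(y)$. $P^{(s)}:=\{y:d_P(y)\ge s\}$, $\mu(P):=(\sup\{s>0:P^{(s)}\neq\emptyset\})^{-1}$, and $\tau(P):=(\sup\{s>0:\mathcal{N}(P^{(s)})=\mathcal{N}(P)\})^{-1}$, where $\mathcal{N}$ denotes the inner normal fan. *)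

From HB Require Import structures.
From mathcomp Require Import all_boot all_order all_algebra.
From mathcomp Require Import all_classical all_reals.
Set Implicit Arguments. Unset Strict Implicit. Unset Printing Implicit Defensive.
Import Order.TTheory GRing.Theory Num.Theory.
Local Open Scope classical_set_scope.
Local Open Scope ring_scope.

Section Defs.
Variables (R : realType) (n : nat).

Definition dotR (w x : 'I_n -> R) : R := \sum_(k < n) w k * x k.

Definition dotZ (c : 'I_n -> int) (x : 'I_n -> R) : R :=
  \sum_(k < n) (c k)%:~R * x k.

Definition primitive (c : 'I_n -> int) : Prop :=
  (\big[gcdn/0%N]_(k < n) `|c k|%N)%N = 1%N.

Definition rational_point (x : 'I_n -> R) : Prop :=
  forall k, exists q : rat, x k = ratr q.

Definition affinely_independent (m : nat) (v : 'I_m -> 'I_n -> R) : Prop :=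
  forall l : 'I_m -> R, \sum_(i < m) l i = 0 ->
    (forall k, \sum_(i < m) l i * v i k = 0) -> forall i, l i = 0.

Definition conv_on (m : nat) (v : 'I_m -> 'I_n -> R) (A : pred 'I_m)
  : set ('I_n -> R) :=
  [set x | exists l : 'I_m -> R, (forall i, 0 <= l i) /\
     (forall i, ~~ A i -> l i = 0) /\ \sum_(i < m) l i = 1 /\
     (forall k, x k = \sum_(i < m) l i * v i k)].

Definition conv (m : nat) (v : 'I_m -> 'I_n -> R) := conv_on v predT.

(* P^(s) = { y : d_P(y) >= s }, where d_P(y) = min_j (<c_j,y> - b_j);
   written out: d_P(y) >= s iff every <c_j,y> - b_j >= s *)
Definition inner_body (m : nat) (c : 'I_m -> 'I_n -> int) (b : 'I_m -> R)
  (s : R) : set ('I_n -> R) :=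
  [set y | forall j, s <= dotZ (c j) y - b j].

Definition face (Q : set ('I_n -> R)) (w : 'I_n -> R) : set ('I_n -> R) :=
  [set x | Q x /\ forall y, Q y -> dotR w x <= dotR w y].

Definition normal_cone (Q F : set ('I_n -> R)) : set ('I_n -> R) :=
  [set u | F `<=` face Q u].

Definition normal_fan (Q : set ('I_n -> R)) : set (set ('I_n -> R)) :=
  [set C | exists w, C = normal_cone Q (face Q w)].

Definition mu_inv (m : nat) (c : 'I_m -> 'I_n -> int) (b : 'I_m -> R) : R :=
  sup [set s : R | 0 < s /\ inner_body c b s !=set0].

Definition mu (m : nat) (c : 'I_m -> 'I_n -> int) (b : 'I_m -> R) : R :=
  (mu_inv c b)^-1.

Definition tau (m : nat) (c : 'I_m -> 'I_n -> int) (b : 'I_m -> R) : R :=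
  (sup [set s : R | 0 < s /\
        normal_fan (inner_body c b s) = normal_fan (inner_body c b 0)])^-1.

End Defs.

From HB Require Import structures.
From mathcomp Require Import all_boot all_order all_algebra.
From mathcomp Require Import all_classical all_reals.
From mathcomp Require Import ring.
Set Implicit Arguments. Unset Strict Implicit. Unset Printing Implicit Defensive.
Import Order.TTheory GRing.Theory Num.Theory.
Local Open Scope classical_set_scope.
Local Open Scope ring_scope.

(* Write points of P in barycentric coordinates l with respect to the
   vertices.  The lattice distance of such a point from the facet F_j is
   l_j * a_j, so y lies in P^(s) iff l_j >= s / a_j for all j.  Since the l_j
   sum to 1, P^(s) is nonempty iff s * S <= 1 with S = \sum_j 1 / a_j; for
   s * S < 1 it is the image of P under a homothety of ratio 1 - s * S (hence
   has the same normal fan), and for s * S = 1 it is the single point with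
   coordinates s / a_j, whose normal fan contains the whole space, unlike the
   fan of P.  Thus both suprema defining mu(P)^-1 and tau(P)^-1 equal 1 / S. *)

Section Pairing.
Variables (R : realType) (n : nat).

Definition bary m (v : 'I_m -> 'I_n -> R) (l : 'I_m -> R) : 'I_n -> R :=
  fun k => \sum_(i < m) l i * v i k.

Definition homothety (al : R) (t x : 'I_n -> R) : 'I_n -> R :=
  fun k => al * x k + t k.

Lemma sum_delta_mul m (j : 'I_m) (F : 'I_m -> R) :
  \sum_(i < m) (i == j)%:R * F i = F j.
Proof.
rewrite (bigD1 j) //= eqxx mul1r big1 ?addr0 // => i /negbTE ->.
by rewrite mul0r.
Qed.

Lemma sum_delta m (j : 'I_m) : \sum_(i < m) (i == j)%:R = 1 :> R.
Proof.
rewrite -[RHS](sum_delta_mul j (fun=> 1)).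
by apply: eq_bigr => i _; rewrite mulr1.
Qed.

Lemma dotZE (c : 'I_n -> int) : @dotZ R n c = dotR (fun k => (c k)%:~R).
Proof. by []. Qed.

Lemma dotR_bary m (w : 'I_n -> R) (v : 'I_m -> 'I_n -> R) (l : 'I_m -> R) :
  dotR w (bary v l) = \sum_(i < m) l i * dotR w (v i).
Proof.
rewrite /dotR /bary; under eq_bigr do rewrite mulr_sumr.
rewrite exchange_big; apply: eq_bigr => i _; rewrite mulr_sumr.
by apply: eq_bigr => k _; rewrite mulrCA.
Qed.

Lemma dotR_homothety (w : 'I_n -> R) (al : R) (t x : 'I_n -> R) :
  dotR w (homothety al t x) = al * dotR w x + dotR w t.
Proof.
rewrite /dotR mulr_sumr -big_split; apply: eq_bigr => k _.
by rewrite mulrDr mulrCA.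
Qed.

Lemma dotRN (w x : 'I_n -> R) : dotR (fun k => - w k) x = - dotR w x.
Proof. by rewrite /dotR -sumrN; apply: eq_bigr => k _; rewrite mulNr. Qed.

Lemma dotR_delta (k : 'I_n) (x : 'I_n -> R) :
  dotR (fun k' => (k' == k)%:R) x = x k.
Proof. exact: sum_delta_mul. Qed.

Lemma primitive_dim_gt0 (c : 'I_n -> int) : primitive c -> (0 < n)%N.
Proof. by case: n c => // c; rewrite /primitive big_ord0. Qed.

Lemma face_homothety (Q : set ('I_n -> R)) (al : R) (t u : 'I_n -> R) :
  0 < al -> face (homothety al t @` Q) u = homothety al t @` face Q u.
Proof.
move=> al_gt0; have mono x y : (dotR u (homothety al t x) <=
    dotR u (homothety al t y)) = (dotR u x <= dotR u y).
  by rewrite !dotR_homothety lerD2r ler_pM2l.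
apply/seteqP; split.
- move=> _ [[x Qx <-] minx]; exists x => //; split => // y Qy.
  by rewrite -mono; apply: minx; exists y.
- move=> _ [x [Qx minx] <-]; split; first by exists x.
  by move=> _ [y Qy <-]; rewrite mono; apply: minx.
Qed.

Lemma normal_fan_homothety (Q : set ('I_n -> R)) (al : R) (t : 'I_n -> R) :
  0 < al -> normal_fan (homothety al t @` Q) = normal_fan Q.
Proof.
move=> al_gt0; have h_inj : injective (homothety al t).
  move=> x y exy; apply/funext => k.
  have /addIr/(mulfI (lt0r_neq0 al_gt0)) := congr1 (fun f => f k) exy.
  by [].
have cone w : normal_cone (homothety al t @` Q) (face (homothety al t @` Q) w)
              = normal_cone Q (face Q w).
  apply/seteqP; split=> u;
    rewrite /normal_cone /= !face_homothety // => sub x Fx.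
  - by have [|y Fy /h_inj <-] := sub (homothety al t x); first by exists x.
  - by case: Fx => y Fy <-; exists y => //; apply: sub.
by apply/seteqP; split => C [w ->]; exists w; rewrite cone.
Qed.

Lemma normal_fan_setT (Q : set ('I_n -> R)) :
  (forall x y, Q x -> Q y -> x = y) -> normal_fan Q setT.
Proof.
move=> Q_sub; exists 0; apply/seteqP; split => // u _ x [Qx _].
by split=> // y Qy; rewrite (Q_sub x y).
Qed.

(* A point minimising every linear functional on Q is the only point of Q. *)
Lemma normal_cone_setT_eq (Q F : set ('I_n -> R)) (x y : 'I_n -> R) :
  normal_cone Q F = setT -> F x -> Q y -> x = y.
Proof.
move=> coneT Fx Qy; have minx u : dotR u x <= dotR u y.
  by have /(_ x Fx) [_ ->] : normal_cone Q F u by rewrite coneT.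
apply/funext => k; apply/le_anti/andP; split.
- by have := minx (fun k' => (k' == k)%:R); rewrite !dotR_delta.
- by have := minx (fun k' => - (k' == k)%:R); rewrite !dotRN !dotR_delta lerN2.
Qed.

End Pairing.

Section Hull.
Variables (R : realType) (n m : nat) (v : 'I_m -> 'I_n -> R).

Lemma conv_on_vertex (A : pred 'I_m) i : A i -> conv_on v A (v i).
Proof.
move=> Ai; exists (fun i' => (i' == i)%:R); split; first by move=> i'.
split; first by move=> i' /negbTE Ai'; case: eqP => // e; rewrite e Ai in Ai'.
by split=> [|k]; rewrite ?sum_delta ?sum_delta_mul.
Qed.

Lemma convP x : conv v x ->
  exists2 l : 'I_m -> R, (forall i, 0 <= l i) /\ \sum_(i < m) l i = 1
                       & x = bary v l.
Proof. by case=> l [l_ge0 [_ [l_sum1 xE]]]; exists l => //; apply/funext. Qed.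

Lemma affinely_independent_inj : affinely_independent v -> injective v.
Proof.
move=> v_ind i j vij; apply/eqP/negPn/negP => /negbTE ij.
pose l i' : R := (i' == i)%:R - (i' == j)%:R.
have := v_ind l; rewrite /l sumrB !sum_delta subrr => /(_ erefl).
have comb k : \sum_(i' < m) l i' * v i' k = 0.
  by under eq_bigr do rewrite mulrBl; rewrite sumrB !sum_delta_mul vij subrr.
by move=> /(_ comb i); rewrite eqxx ij subr0 => /eqP; rewrite oner_eq0.
Qed.

Lemma conv_face_vertex (w : 'I_n -> R) (i0 : 'I_m) :
  exists i, face (conv v) w (v i).
Proof.
case: (arg_minP (fun i => dotR w (v i)) (erefl : predT i0)) => i _ min_i.
exists i; split; first exact: conv_on_vertex.
move=> _ /convP[l [l_ge0 l_sum1] ->]; rewrite dotR_bary.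
rewrite -[dotR w _]mul1r -l_sum1 mulr_suml.
by apply: ler_sum => i' _; apply: ler_wpM2l; last exact: min_i.
Qed.

Lemma conv_normal_fan_setT (i j : 'I_m) :
  affinely_independent v -> i != j -> ~ normal_fan (conv v) setT.
Proof.
move=> v_ind ij [w coneT]; have [i0 Fi0] := conv_face_vertex w i.
have eq_i0 k : v i0 = v k.
  by apply: normal_cone_setT_eq (esym coneT) Fi0 _; apply: conv_on_vertex.
have /(affinely_independent_inj v_ind) eq_ij : v i = v j by rewrite -!eq_i0.
by rewrite eq_ij eqxx in ij.
Qed.

End Hull.

Section Simplex.
Variables (R : realType) (n : nat).
Variables (v : 'I_n.+1 -> 'I_n -> R) (c : 'I_n.+1 -> 'I_n -> int)
  (b : 'I_n.+1 -> R).
Hypothesis v_ind : affinely_independent v.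
Hypothesis conv_ineqs : conv v = [set x | forall j, b j <= dotZ (c j) x].
Hypothesis facetE : forall j,
  [set x | conv v x /\ dotZ (c j) x = b j] = conv_on v (fun i => i != j).

Definition height (i : 'I_n.+1) : R := dotZ (c i) (v i) - b i.

Definition inv_height_sum : R := \sum_(i < n.+1) (height i)^-1.

Lemma dotZ_vertex_off i j : i != j -> dotZ (c j) (v i) = b j.
Proof.
move=> ij; have : conv_on v (fun i' => i' != j) (v i) by exact: conv_on_vertex.
by rewrite -facetE => -[].
Qed.

Lemma dotZ_bary (l : 'I_n.+1 -> R) j :
  dotZ (c j) (bary v l) = (\sum_i l i) * b j + l j * height j.
Proof.
have vertexE i : dotZ (c j) (v i) = b j + (i == j)%:R * height j.
  have [->|ij] := eqVneq i j; first by rewrite mul1r /height addrC subrK.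
  by rewrite mul0r addr0 dotZ_vertex_off.
rewrite dotZE dotR_bary -dotZE; under eq_bigr do rewrite vertexE mulrDr.
rewrite big_split /= -mulr_suml; congr (_ + _).
by under eq_bigr do rewrite mulrCA; rewrite sum_delta_mul.
Qed.

Lemma height_gt0 j : 0 < height j.
Proof.
have vj : conv v (v j) by exact: conv_on_vertex.
move: (vj); rewrite conv_ineqs => /(_ j).
rewrite -subr_ge0 le_eqVlt => /orP[/eqP hj0|//].
(* Otherwise v j lies on the facet opposite to it, so it is an affine
   combination of the other vertices. *)
have : [set x | conv v x /\ dotZ (c j) x = b j] (v j).
  by split=> //; apply/eqP; rewrite -subr_eq0 -hj0.
rewrite facetE => -[l [_ [l_off [l_sum1 vjE]]]].
have := v_ind (l := fun i => l i - (i == j)%:R).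
rewrite sumrB l_sum1 sum_delta subrr => /(_ erefl).
have comb k : \sum_i (l i - (i == j)%:R) * v i k = 0.
  by under eq_bigr do rewrite mulrBl; rewrite sumrB sum_delta_mul -vjE subrr.
move=> /(_ comb j); rewrite l_off ?negbK // eqxx sub0r => /eqP.
by rewrite oppr_eq0 oner_eq0.
Qed.

Lemma inv_height_sum_gt0 : 0 < inv_height_sum.
Proof.
rewrite /inv_height_sum (bigD1 ord0) //=; apply: ltr_pwDl.
  by rewrite invr_gt0 height_gt0.
by apply: sumr_ge0 => i _; rewrite invr_ge0 ltW ?height_gt0.
Qed.

Lemma inner_body0 : inner_body c b 0 = conv v.
Proof.
rewrite conv_ineqs; apply/seteqP; split=> x /= xP j.
- by rewrite -subr_ge0.
- by rewrite subr_ge0.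
Qed.

Lemma inner_body_coords s y : 0 <= s -> inner_body c b s y ->
  exists2 l : 'I_n.+1 -> R, \sum_i l i = 1 /\ y = bary v l
                          & forall j, 0 <= l j - s / height j.
Proof.
move=> s_ge0 ys; have : conv v y.
  by rewrite -inner_body0 => j; apply: le_trans s_ge0 (ys j).
case/convP => l [_ l_sum1] yE; exists l => // j.
have := ys j; rewrite yE dotZ_bary l_sum1 mul1r addrC addKr.
by rewrite subr_ge0 ler_pdivrMr ?height_gt0.
Qed.

Lemma inner_body_le s y :
  0 <= s -> inner_body c b s y -> s * inv_height_sum <= 1.
Proof.
move=> s_ge0 /(inner_body_coords s_ge0)[l [l_sum1 _] l_ge]; rewrite -subr_ge0.
rewrite -l_sum1 /inv_height_sum mulr_sumr -sumrB.
by apply: sumr_ge0 => j _; exact: l_ge.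
Qed.

Lemma inner_body_center s y : 0 <= s -> 1 <= s * inv_height_sum ->
  inner_body c b s y -> y = bary v (fun i => s / height i).
Proof.
move=> s_ge0 sS_ge1 /(inner_body_coords s_ge0)[l [l_sum1 ->] l_ge].
have slack0 : \sum_j (l j - s / height j) = 0.
  apply/le_anti; rewrite sumr_ge0 ?andbT => [|j _]; last exact: l_ge.
  by rewrite sumrB l_sum1 -mulr_sumr subr_le0.
apply/funext => k; apply: eq_bigr => i _; congr (_ * _); apply/eqP.
by rewrite -subr_eq0; apply/eqP; apply: (psumr_eq0P _ slack0) => // j _.
Qed.

Lemma inner_body_homothety s : s * inv_height_sum < 1 ->
  inner_body c b s = homothety (1 - s * inv_height_sum)
                       (bary v (fun i => s / height i)) @` inner_body c b 0.
Proof.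
set lam := 1 - _; set t := bary _ _ => sS_lt1.
have lam_gt0 : 0 < lam by rewrite subr_gt0.
have dist x j : dotZ (c j) (homothety lam t x) - b j
                = lam * (dotZ (c j) x - b j) + s.
  rewrite dotZE dotR_homothety -!dotZE dotZ_bary -mulr_sumr.
  rewrite divfK ?lt0r_neq0 ?height_gt0 // /lam /inv_height_sum; ring.
apply/seteqP; split => y.
- move=> ys; pose x k := lam^-1 * (y k - t k).
  have yE : homothety lam t x = y.
    by apply/funext => k; rewrite /homothety /x mulVKf ?lt0r_neq0 ?subrK.
  exists x => // j; move: (ys j); rewrite -yE dist lerDr.
  by rewrite pmulr_rge0 // subr0.
- by case=> x x0 <- j; rewrite dist lerDr pmulr_rge0 // -[_ - _]subr0 x0.
Qed.

Lemma mu_set : [set s | 0 < s /\ inner_body c b s !=set0]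
               = [set` `]0, inv_height_sum^-1]].
Proof.
have S_gt0 := inv_height_sum_gt0; apply/seteqP; split => s /=.
- move=> [s_gt0 [y ys]]; rewrite in_itv /= s_gt0 -div1r ler_pdivlMr //.
  exact: inner_body_le (ltW s_gt0) ys.
- rewrite in_itv /= => /andP[s_gt0 s_le]; split => //.
  exists (bary v (fun i => inv_height_sum^-1 / height i)) => j.
  rewrite dotZ_bary -mulr_sumr mulVf ?lt0r_neq0 // mul1r addrC addKr.
  by rewrite divfK ?lt0r_neq0 ?height_gt0.
Qed.

Hypothesis n_gt0 : (0 < n)%N.

Lemma tau_set :
  [set s | 0 < s /\
           normal_fan (inner_body c b s) = normal_fan (inner_body c b 0)]
  = [set` `]0, inv_height_sum^-1[].
Proof.
have S_gt0 := inv_height_sum_gt0; apply/seteqP; split => s /=.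
- move=> [s_gt0 fanE]; rewrite in_itv /= s_gt0 -div1r ltr_pdivlMr // ltNge.
  apply/negP => sS_ge1.
  apply: (@conv_normal_fan_setT _ _ _ v ord0 ord_max) => //.
    by rewrite -(inj_eq val_inj) /= eq_sym -lt0n.
  rewrite -inner_body0 -fanE; apply: normal_fan_setT => x y xs ys.
  have center := inner_body_center (ltW s_gt0) sS_ge1.
  by rewrite (center _ xs) (center _ ys).
- rewrite in_itv /= -div1r ltr_pdivlMr // => /andP[s_gt0 sS_lt1]; split => //.
  by rewrite inner_body_homothety // normal_fan_homothety // subr_gt0.
Qed.

End Simplex.
Unset Implicit Arguments.

Theorem proposition3p9 (R : realType) (n : nat)
  (v : 'I_n.+1 -> 'I_n -> R) (c : 'I_n.+1 -> 'I_n -> int) (b : 'I_n.+1 -> R) :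
  (forall i, rational_point (v i)) ->
  affinely_independent v ->
  (forall j, primitive (c j)) ->
  conv v = [set x | forall j, b j <= dotZ (c j) x] ->
  (forall j, [set x | conv v x /\ dotZ (c j) x = b j]
             = conv_on v (fun i => i != j)) ->
  tau c b = mu c b /\
  mu c b = \sum_(i < n.+1) (dotZ (c i) (v i) - b i)^-1.
Proof.
move=> _ v_ind c_prim conv_ineqs facetE.
have n_gt0 := primitive_dim_gt0 (c_prim ord0).
have S_gt0 := inv_height_sum_gt0 v_ind conv_ineqs facetE.
rewrite /tau /mu /mu_inv (mu_set v_ind conv_ineqs facetE)
  (tau_set v_ind conv_ineqs facetE n_gt0).
by rewrite !sup_itv ?bnd_simp ?invr_gt0 // invrK.
Qed.
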